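(* Let $m\in\mathbb N$ and let $\xi_1,\dots,\xi_m$ be real random variables with partial sums $S_0=0$, $S_k=\xi_1+\dots+\xi_k$ ($1\le k\le m$). Assume (i) $S_m=0$ a.s.; (ii) for every cyclic permutation $\pi$ of $\{1,\dots,m\}$, $(\xi_1,\dots,\xi_m)$ and $(\xi_{\pi(1)},\dots,\xi_{\pi(m)})$ have the same distribution; (iii) for every $1\le k\le m-1$ the distribution of $S_k$ has no atoms. Then $$\mathbb P(S_1>0,\dots,S_{m-1}>0)=\frac1m.$$
   Context: A cyclic permutation of $\{1,\dots,m\}$ is a permutation whose cycle decomposition consists of exactly one cycle. *)

From HB Require Import structures.
From mathcomp Require Import all_boot all_order all_algebra all_fingroup.
From mathcomp Require Import all_classical all_reals all_analysis.
Set Implicit Arguments. Unset Strict Implicit. Unset Printing Implicit Defensive.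
Import Order.TTheory GRing.Theory Num.Theory.

Definition cyclic_perm (T : finType) (s : {perm T}) : bool :=
  #|porbits s| == 1%N.

Local Open Scope ring_scope.

(* Partial sums: for xi indexed by 'I_m (xi i = \xi_{i+1}),
   partial_sum xi k w = xi_1 w + ... + xi_k w. *)
Definition partial_sum (T : Type) (R : realType) (m : nat)
  (xi : 'I_m -> T -> R) (k : nat) (w : T) : R :=
  \sum_(i < m | (i < k)%N) xi i w.

Definition perm_vec (T : Type) (R : realType) (m : nat)
  (xi : 'I_m -> T -> R) (s : {perm 'I_m}) (w : T) : m.-tuple R :=
  [tuple xi (s i) w | i < m].

From HB Require Import structures.
From mathcomp Require Import all_boot all_order all_algebra all_fingroup.
From mathcomp Require Import all_classical all_reals all_analysis.
From mathcomp Require Import zify.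
Import Order.TTheory GRing.Theory Num.Theory.
Local Open Scope classical_set_scope.
Local Open Scope ring_scope.

(* Extend xi_1, ..., xi_m periodically and let S_t be
   its partial sums; since S_m = 0, S is m-periodic.  The rotation of the
   vector starting after position j has positive partial sums
   S_{j+k} - S_j (1 <= k < m) exactly when j is the strict minimiser of
   S_0, ..., S_{m-1}.  The atomless hypothesis together with cyclic
   exchangeability makes these m values almost surely distinct, so almost
   surely exactly one of the m rotations has positive partial sums.  By
   exchangeability all m rotations are equally likely to do so, whence each
   probability is 1/m. *)

Section cycle_shift.
Variable n : nat.

Definition cycle_shift : {perm 'I_n.+1} := perm (@ordS_inj n.+1).

Lemma cycle_shiftE i : cycle_shift i = inZp (i + 1).
Proof. by apply: val_inj; rewrite permE /= addn1. Qed.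

Lemma cycle_shiftX k i : (cycle_shift ^+ k)%g i = inZp (i + k).
Proof.
elim: k => [|k IH]; first by rewrite expg0 perm1 addn0 valZpK.
rewrite expgSr permM IH cycle_shiftE; apply: val_inj => /=.
by rewrite modnDml !addnS addn0.
Qed.

Lemma cyclic_cycle_shift : cyclic_perm cycle_shift.
Proof.
rewrite /cyclic_perm.
suff -> : porbits cycle_shift = [set porbit cycle_shift ord0]%SET.
  by rewrite cards1.
apply/setP => A; rewrite inE; apply/imsetP/eqP => [[i _ ->]|->]; last first.
  by exists ord0.
have -> : i = (cycle_shift ^+ i)%g ord0 by rewrite cycle_shiftX add0n valZpK.
exact: porbit_perm.
Qed.

End cycle_shift.

Definition rot_tuple (T : Type) (n j : nat) (v : n.+1.-tuple T) :
    n.+1.-tuple T :=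
  [tuple tnth v (inZp (i + j)) | i < n.+1].
Arguments rot_tuple {T n}.

Lemma rot_tupleD (T : Type) n i j (v : n.+1.-tuple T) :
  rot_tuple i (rot_tuple j v) = rot_tuple (j + i) v.
Proof.
apply: eq_from_tnth => l; rewrite !tnth_mktuple; congr tnth; apply: val_inj.
by rewrite /= modnDml addnAC addnA.
Qed.

Lemma rot_tuple0 (T : Type) n (v : n.+1.-tuple T) : rot_tuple 0 v = v.
Proof. by apply: eq_from_tnth => i; rewrite tnth_mktuple addn0 valZpK. Qed.

Lemma measurable_rot_tuple d (T : measurableType d) n j :
  measurable_fun setT (@rot_tuple T n j).
Proof.
apply/measurable_fun_tnthP => i.
have -> : (tnth (T:=T))^~ i \o rot_tuple j = (tnth (T:=T))^~ (inZp (i + j)).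
  by apply/funext => v /=; rewrite tnth_mktuple.
exact: measurable_tnth.
Qed.

Section partial_sums.
Context {R : realType} {n : nat}.
Implicit Types (v : n.+1.-tuple R) (j k t : nat).

Definition tuple_psum k v : R := \sum_(i < n.+1 | (i < k)%N) tnth v i.

Definition cycle_psum v t : R := \sum_(i < t) tnth v (inZp i).

Definition positive_psums v := forall k, (1 <= k <= n)%N -> 0 < tuple_psum k v.

Lemma cycle_psum_full v : cycle_psum v n.+1 = tuple_psum n.+1 v.
Proof.
rewrite /tuple_psum (eq_bigl xpredT) => [|i]; last exact: ltn_ord.
by apply: eq_bigr => i _; rewrite valZpK.
Qed.

Lemma cycle_psum_shift v j k :
  \sum_(i < k) tnth v (inZp (i + j)) = cycle_psum v (j + k) - cycle_psum v j.
Proof.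
elim: k => [|k IH]; first by rewrite big_ord0 addn0 subrr.
by rewrite big_ord_recr /= IH /cycle_psum addnS big_ord_recr /= addrAC addnC.
Qed.

Lemma tuple_psum_rot v j k : (k <= n.+1)%N ->
  tuple_psum k (rot_tuple j v) = cycle_psum v (j + k) - cycle_psum v j.
Proof.
move=> kn; rewrite -cycle_psum_shift
  (big_ord_widen _ (fun i => tnth v (inZp (i + j))) kn).
by apply: eq_bigr => i _; rewrite tnth_mktuple.
Qed.

Lemma measurable_tuple_psum k : measurable_fun setT (tuple_psum k).
Proof.
have -> : tuple_psum k =
    (fun v => \sum_(i <- index_enum 'I_n.+1)
                (if (i < k)%N then tnth v i else 0)).
  by apply/funext => v; rewrite /tuple_psum big_mkcond.
apply: measurable_sum => i.
by case: (i < k)%N; [exact: measurable_tnth | exact: measurable_cst].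
Qed.

Lemma measurable_positive_psums : measurable [set v | positive_psums v].
Proof.
pose F k := if (1 <= k <= n)%N then tuple_psum k @^-1` `]0, +oo[ else setT.
have -> : [set v | positive_psums v] = \bigcap_k F k.
  apply/seteqP; split => v /= H k.
  - move=> _; rewrite /F; case: ifP => // hk.
    by rewrite /= in_itv /= andbT; exact: H.
  - by move=> hk; move: (H k I); rewrite /F hk /= in_itv /= andbT.
apply: bigcapT_measurable => k; rewrite /F; case: ifP => // _.
by rewrite -[_ @^-1` _]setTI; apply: measurable_tuple_psum.
Qed.

End partial_sums.

Section cycle_lemma.
Variables (R : realType) (n : nat) (v : n.+1.-tuple R).
Local Notation S := (cycle_psum v).
Hypothesis sum0 : tuple_psum n.+1 v = 0.

Lemma cycle_psum_periodic t : S (t + n.+1) = S t.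
Proof.
have := cycle_psum_shift v n.+1 t; rewrite cycle_psum_full sum0 subr0 addnC.
move=> <-; apply: eq_bigr => i _; congr tnth.
by apply: val_inj => /=; rewrite modnDr.
Qed.

Lemma positive_psums_rotP (j : 'I_n.+1) :
  positive_psums (rot_tuple j v) <-> forall t : 'I_n.+1, t != j -> S j < S t.
Proof.
have jn : (j <= n)%N by rewrite -ltnS.
split=> [pos t tj | jmin k /andP[k1 kn]].
- have tn : (t <= n)%N by rewrite -ltnS.
  rewrite -subr_gt0; move: tj; rewrite -val_eqE /=.
  case: (ltngtP t j) => // [tj|jt] _.
    have := pos (t + n.+1 - j)%N; rewrite tuple_psum_rot; last lia.
    have -> : (j + (t + n.+1 - j) = t + n.+1)%N by lia.
    by rewrite cycle_psum_periodic; apply; apply/andP; split; lia.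
  have := pos (t - j)%N; rewrite tuple_psum_rot; last lia.
  by rewrite subnKC ?(ltnW jt) //; apply; apply/andP; split; lia.
- rewrite tuple_psum_rot ?subr_gt0; last lia.
  case: (leqP (j + k) n) => jk.
    apply: (jmin (Ordinal (jk : (j + k < n.+1)%N))).
    by rewrite -val_eqE /=; lia.
  have jk' : (j + k - n.+1 < n.+1)%N by lia.
  rewrite -(subnK jk) cycle_psum_periodic; apply: (jmin (Ordinal jk')).
  by rewrite -val_eqE /=; lia.
Qed.

Hypothesis S_inj : injective (fun t : 'I_n.+1 => S t).

Lemma cycle_lemma : exists! j : 'I_n.+1, positive_psums (rot_tuple j v).
Proof.
have [j _ jmin] := arg_minP (fun t : 'I_n.+1 => S t) (isT : xpredT ord0).
have jstrict t : t != j -> S j < S t.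
  move=> tj; rewrite lt_neqAle jmin // andbT.
  by apply: contra tj => /eqP/S_inj->.
exists j; split=> [|i /positive_psums_rotP imin].
  exact/positive_psums_rotP.
apply/eqP; apply: contraT => ij.
have ji : i != j by rewrite eq_sym.
by have := lt_trans (jstrict _ ji) (imin _ ij); rewrite ltxx.
Qed.

End cycle_lemma.

Lemma probability_ae_partition {d} {T : measurableType d} {R : realType}
    (P : probability T R) {n} (A : 'I_n -> set T) :
  (forall j, measurable (A j)) -> {ae P, forall w, exists! j, A j w} ->
  (\sum_(j < n) P (A j))%E = 1%E.
Proof.
move=> mA [N [mN PN0 subN]].
have PDN B : measurable B -> P (B `\` N) = P B.
  move=> mB; rewrite [RHS](measureDI P mB mN).
  rewrite (@subset_measure0 _ _ _ P (B `&` N) N) ?adde0 //.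
  exact: measurableI.
have cover : \big[setU/set0]_(j < n) (A j `\` N) = ~` N.
  rewrite -bigcup_pred; apply/seteqP; split => [w [j _ [] //]|w Nw].
  have [j [Aj _]] : exists! j, A j w by apply: contra_notP Nw => /subN.
  by exists j.
have disj : trivIset setT (fun j => A j `\` N).
  move=> i j _ _ [w [[Ai Nw] [Aj _]]].
  have [k [_ kuniq]] : exists! j, A j w by apply: contra_notP Nw => /subN.
  by rewrite -(kuniq i Ai) -(kuniq j Aj).
rewrite -(eq_bigr _ (fun j _ => PDN _ (mA j))) -measure_bigsetU_ord //.
  by rewrite cover; have := probability_setC P mN; rewrite PN0 sube0.
by move=> j; apply: measurableD.
Qed.

Lemma enatmul_eq1 (R : realType) (p : \bar R) n :
  (p *+ n.+1 = 1)%E -> p = (n.+1%:R^-1)%:E.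
Proof.
case: p => [r|//|//]; last by rewrite enatmul_ninfty.
  rewrite -EFin_natmul => -[rn]; congr EFin.
  have nz : (n.+1%:R : R) != 0 by rewrite pnatr_eq0.
  by apply: (mulIf nz); rewrite mulVf // mulr_natr.
by rewrite enatmul_pinfty.
Qed.

Section cyclically_exchangeable.
Context d (T : measurableType d) (R : realType) (P : probability T R) (n : nat).
Variable X : T -> n.+1.-tuple R.
Hypothesis mX : measurable_fun setT X.
Hypothesis X_sum0 : {ae P, forall w, tuple_psum n.+1 (X w) = 0}.
Hypothesis rot1_invariant_law : forall B, measurable B ->
  P (X @^-1` B) = P (X @^-1` (rot_tuple 1 @^-1` B)).
Hypothesis X_atomless : forall k, (1 <= k <= n)%N -> forall x,
  P ((tuple_psum k \o X) @^-1` [set x]) = 0%E.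

Let measurable_preimage {f : n.+1.-tuple R -> n.+1.-tuple R} {B} :
  measurable_fun setT f -> measurable B -> measurable (f @^-1` B).
Proof. by move=> mf mB; rewrite -[_ @^-1` _]setTI; apply: mf. Qed.

Let measurable_X_preimage {B} : measurable B -> measurable (X @^-1` B).
Proof. by move=> mB; rewrite -[_ @^-1` _]setTI; apply: mX. Qed.

Lemma rot_invariant_law j B : measurable B ->
  P (X @^-1` B) = P (X @^-1` (rot_tuple j @^-1` B)).
Proof.
elim: j B => [|j IH] B mB.
  by rewrite (_ : rot_tuple 0 = id) //; apply/funext => v; exact: rot_tuple0.
have mrotB := measurable_preimage (measurable_rot_tuple _ _ _ j) mB.
rewrite IH // rot1_invariant_law //; congr (P (X @^-1` _)).
by apply/seteqP; split => v /=; rewrite rot_tupleD.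
Qed.

Lemma ae_cycle_psum_neq a b : (a < b <= n)%N ->
  {ae P, forall w, cycle_psum (X w) a != cycle_psum (X w) b}.
Proof.
move=> ab; have bn : (b - a <= n.+1)%N by lia.
pose E := X @^-1` (rot_tuple a @^-1` (tuple_psum (b - a) @^-1` [set 0])).
have mpsum0 : measurable (@tuple_psum R n (b - a) @^-1` [set 0]).
  rewrite -[X in measurable X]setTI.
  exact: measurable_tuple_psum measurableT _ (measurable_set1 (0 : R)).
exists E; split.
- apply: measurable_X_preimage; apply: measurable_preimage mpsum0.
  exact: measurable_rot_tuple.
- by rewrite /E -rot_invariant_law //; apply: X_atomless; lia.
- move=> w /= /negP /negbNE /eqP Sab.
  rewrite /E /= tuple_psum_rot // subnKC ?Sab ?subrr //.
  by case/andP: ab => /ltnW.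
Qed.

Lemma ae_cycle_psum_eq (a b : 'I_n.+1) :
  {ae P, forall w, cycle_psum (X w) a = cycle_psum (X w) b -> a = b}.
Proof.
case: (ltngtP a b) => [ab|ba|/val_inj -> //]; last exact: aeW.
- have abn : (a < b <= n)%N by rewrite ab -ltnS ltn_ord.
  by apply: filterS (ae_cycle_psum_neq _ _ abn) => w /eqP Sab /Sab.
- have ban : (b < a <= n)%N by rewrite ba -ltnS ltn_ord.
  by apply: filterS (ae_cycle_psum_neq _ _ ban) => w /eqP Sba /esym /Sba.
Qed.

Lemma ae_cycle_psum_inj :
  {ae P, forall w, injective (fun t : 'I_n.+1 => cycle_psum (X w) t)}.
Proof.
apply: filterS (filter_forall _
  (fun ab : 'I_n.+1 * 'I_n.+1 => ae_cycle_psum_eq ab.1 ab.2)).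
by move=> w inj a b /(inj (a, b)).
Qed.

Lemma probability_positive_psums :
  P (X @^-1` [set v | positive_psums v]) = (n.+1%:R^-1)%:E.
Proof.
pose A j := X @^-1` (rot_tuple j @^-1` [set v | positive_psums v]).
have mA (j : 'I_n.+1) : measurable (A j).
  apply: measurable_X_preimage.
  exact: measurable_preimage (measurable_rot_tuple _ _ _ _)
    measurable_positive_psums.
have ae_unique : {ae P, forall w, exists! j : 'I_n.+1, A j w}.
  by apply: filterS2 X_sum0 ae_cycle_psum_inj => w; exact: cycle_lemma.
have := probability_ae_partition P _ mA ae_unique.
rewrite (eq_bigr _ (fun (j : 'I_n.+1) _ =>
  esym (rot_invariant_law j _ measurable_positive_psums))).
by rewrite sumr_const card_ord; exact: enatmul_eq1.
Qed.

End cyclically_exchangeable.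

Theorem mainTheorem8 (d : measure_display) (T : measurableType d)
  (R : realType) (P : probability T R) (m : nat) (xi : 'I_m -> {RV P >-> R}) :
  (0 < m)%N ->
  {ae P, forall w, partial_sum (fun i => xi i : T -> R) m w = 0} ->
  (forall s : {perm 'I_m}, cyclic_perm s ->
     forall B : set (m.-tuple R), measurable B ->
       P (perm_vec (fun i => xi i : T -> R) 1%g @^-1` B) =
       P (perm_vec (fun i => xi i : T -> R) s @^-1` B)) ->
  (forall k : nat, (1 <= k <= m.-1)%N -> forall x : R,
     P (partial_sum (fun i => xi i : T -> R) k @^-1` [set x]) = 0%E) ->
  P [set w | forall k : nat, (1 <= k <= m.-1)%N ->
               0 < partial_sum (fun i => xi i : T -> R) k w] = (m%:R^-1)%:E.
Proof.
case: m xi => [//|n] xi _ sum0 cyc atomless /=.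
set xf := fun i => xi i : T -> R.
set X := perm_vec xf 1%g.
have mX : measurable_fun setT X.
  apply/measurable_fun_tnthP => i.
  have -> : (tnth (T:=R))^~ i \o X = xi i.
    by apply/funext => w /=; rewrite tnth_mktuple perm1.
  exact: measurable_funPT.
have psumE k : partial_sum xf k = tuple_psum k \o X.
  by apply/funext => w; apply: eq_bigr => i _; rewrite /= tnth_mktuple perm1.
have rotE : perm_vec xf (cycle_shift n) = rot_tuple 1 \o X.
  apply/funext => w; apply: eq_from_tnth => i.
  by rewrite /= !tnth_mktuple perm1 cycle_shiftE.
have -> : [set w | forall k, (1 <= k <= n)%N -> 0 < partial_sum xf k w] =
    X @^-1` [set v | positive_psums v].
  by apply/seteqP; split => w /= pos k /pos; rewrite psumE.
apply: probability_positive_psums mX _ _ _.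
- by apply: filterS sum0 => w; rewrite psumE.
- by move=> B mB; rewrite (cyc _ (cyclic_cycle_shift n) B mB) rotE.
- by move=> k kn x; rewrite -psumE; exact: atomless.
Qed.
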